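(* In the polar Brauer category $\mathcal{AB}(\delta)$ over a commutative ring $K$, $\delta\in K$, with $\mathbb G_i=Z_i\otimes I-\mathbb H^i$ and $\Phi=(1-\delta)\mathbb I_1-\mathbb H$, the following hold in $\mathrm{End}_{\mathcal{AB}(\delta)}(1)$ for all $\ell\ge0$: $$(\mathbb H^{\ell+1})^T=\sum_{i=1}^\ell\mathbb G_i\Phi^{\ell-i}-\mathbb H\Phi^\ell,\qquad (\mathbb H^{\ell+1})^T=\sum_{i=1}^\ell\Phi^{\ell-i}\mathbb G_i-\Phi^\ell\mathbb H,$$ and in particular $\sum_{i=1}^{\ell-1}[Z_i\otimes I,\Phi^{\ell-i}]=0$ for all $\ell$.
   Context: Let $K$ be a commutative ring and $\delta\in K$. The Brauer category $\mathcal B(\delta)$ has objects $\mathbb N$; $\mathrm{Hom}_{\mathcal B(\delta)}(r,s)$ is the free $K$-module on Brauer $(r,s)$-diagrams; composition $BA$ (first $A$, then $B$) is stacking with closed loops replaced by a factor $\delta$; $\otimes$ is juxtaposition. $I$ is the identity of $1$, $I_r=I^{\otimes r}$, $X$ the crossing, $\cap:2\to0$ the cap, $\cup:0\to2$ the cup, $H=X-\cup\circ\cap$. The polar Brauer category $\mathcal{AB}(\delta)$ is the $K$-linear category with objects $\mathbb N$ generated, under composition and the right action $\mathbb D\mapsto\mathbb D\otimes B$ of morphisms $B$ of $\mathcal B(\delta)$ (juxtaposing $B$ on the right; $\mathbb D:r\to s$, $B:k\to\ell$ give $\mathbb D\otimes B:r+k\to s+\ell$), by $\mathbb I_0$ (a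 vertical pole, identity of $0$) and $\mathbb H:1\to1$ (pole joined by a horizontal connector to one thin strand), subject to: (i) $(\mathbb I_0\otimes B)(\mathbb I_0\otimes A)=\mathbb I_0\otimes BA$, $(\mathbb H\otimes B)(\mathbb I_1\otimes A)=(\mathbb I_1\otimes B)(\mathbb H\otimes A)=\mathbb H\otimes BA$, with $\mathbb I_r=\mathbb I_0\otimes I_r$; (ii) $[\mathbb H_{01},\mathbb H_{02}+\mathbb H_{12}]=0$ with $[a,b]=ab-ba$, $\mathbb H_{01}=\mathbb H\otimes I$, $\mathbb X_0=\mathbb I_0\otimes X$, $\mathbb H_{02}=\mathbb X_0\mathbb H_{01}\mathbb X_0$, $\mathbb H_{12}=\mathbb I_0\otimes H$; (iii) $\mathbb H^T=-\mathbb H$, where for $\mathbb D:1\to1$ we write $\mathbb D^T=(\mathbb I_0\otimes\cap\otimes I)(\mathbb D\otimes X)(\mathbb I_0\otimes\cup\otimes I)$; relations are imposed in all composites and right tensor products. Products denote composition, powers are composition powers ($\mathbb H^0=\Phi^0=\mathbb I_1$). Let $\Pi=\mathbb I_0\otimes\cap$, $\amalg=\mathbb I_0\otimes\cup$ and $Z_\ell=\Pi(\mathbb H^\ell\otimes I)\amalg\in\mathrm{End}(0)$ for $\ell\ge1$. *)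

From HB Require Import structures.
Set Warnings "-notation-overridden,-ambiguous-paths,-projection-no-head-constant,-redundant-canonical-projection".
From mathcomp Require Import all_boot all_order all_algebra.

Set Implicit Arguments.
Unset Strict Implicit.
Unset Printing Implicit Defensive.

Import GRing.Theory.

(* A Brauer (r,s)-diagram is a perfect matching of the r bottom points   *)
(* (inl i, i : 'I_r) and the s top points (inr j, j : 'I_s), encoded as  *)
(* a fixed-point-free involution.  Points in a row are numbered from the *)
(* left.                                                                 *)

Definition bpt (r s : nat) := ('I_r + 'I_s)%type.

Definition is_brauer r s (f : {ffun bpt r s -> bpt r s}) : bool :=
  [forall x, (f (f x) == x) && (f x != x)].

Record bdiag (r s : nat) := BDiag {
  bfun :> {ffun bpt r s -> bpt r s};
  bfunP : is_brauer bfun }.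

HB.instance Definition _ r s := [isSub for @bfun r s].
HB.instance Definition _ r s := [Equality of bdiag r s by <:].

Section BComp.
Variables (r s t : nat) (d : bdiag r s) (e : bdiag s t).

(* points of the stacked picture: outer points (bottom of d / top of e)  *)
(* and the s middle points                                               *)
Definition cpt := (('I_r + 'I_t) + 'I_s)%type.

Definition inj_lo (p : bpt r s) : cpt :=
  match p with inl i => inl (inl i) | inr m => inr m end.
Definition inj_hi (p : bpt s t) : cpt :=
  match p with inl m => inr m | inr j => inl (inr j) end.

Definition cgraph : rel cpt := fun q q' =>
  [exists p, (inj_lo p == q) && (inj_lo (d p) == q')] ||
  [exists p, (inj_hi p == q) && (inj_hi (e p) == q')].

Definition bcomp_fun (x : bpt r t) : bpt r t :=
  odflt x [pick y | (y != x) && connect cgraph (inl x) (inl y)].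

(* number of closed loops: components consisting only of middle points *)
Definition bcomp_loops : nat :=
  #|[pred m : 'I_s | (fingraph.root cgraph (inr m) == inr m) &&
                     ~~ [exists y, connect cgraph (inr m) (inl y)]]|.

(* e \o d = delta ^ (bcomp_loops) * (diagram) ; the diagram is always   *)
(* valid, the option only avoids a proof obligation                     *)
Definition bcomp : option (nat * bdiag r t) :=
  match insub [ffun x => bcomp_fun x] with
  | Some c => Some (bcomp_loops, c)
  | None => None
  end.
End BComp.

Section BTens.
Variables (r s k l : nat) (d : bdiag r s) (e : bdiag k l).

Definition lift_l (p : bpt r s) : bpt (r + k) (s + l) :=
  match p with inl i => inl (lshift k i) | inr j => inr (lshift l j) end.
Definition lift_r (p : bpt k l) : bpt (r + k) (s + l) :=
  match p with inl i => inl (rshift r i) | inr j => inr (rshift s j) end.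

Definition btens_fun (x : bpt (r + k) (s + l)) : bpt (r + k) (s + l) :=
  match x with
  | inl i => match split i with
             | inl i1 => lift_l (d (inl i1)) | inr i2 => lift_r (e (inl i2)) end
  | inr j => match split j with
             | inl j1 => lift_l (d (inr j1)) | inr j2 => lift_r (e (inr j2)) end
  end.

Definition btens : option (bdiag (r + k) (s + l)) := insub [ffun x => btens_fun x].
End BTens.

Definition bid_fun r : {ffun bpt r r -> bpt r r} :=
  [ffun x => match x with inl i => inr i | inr i => inl i end].
Lemma bid_proof r : is_brauer (bid_fun r).
Proof. by apply/forallP => -[i|i]; rewrite !ffunE /= !eqxx. Qed.
Definition bid r : bdiag r r := BDiag (bid_proof r).

Lemma rev_ord2_neq (i : 'I_2) : rev_ord i != i.
Proof. by case: i => -[|[|]]. Qed.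

Definition bX_fun : {ffun bpt 2 2 -> bpt 2 2} :=
  [ffun x => match x with inl i => inr (rev_ord i) | inr i => inl (rev_ord i) end].
Lemma bX_proof : is_brauer bX_fun.
Proof. by apply/forallP => -[i|i]; rewrite !ffunE /= rev_ordK !eqxx. Qed.
Definition bX : bdiag 2 2 := BDiag bX_proof.

Definition bcap_fun : {ffun bpt 2 0 -> bpt 2 0} :=
  [ffun x => match x with inl i => inl (rev_ord i) | inr i => inr i end].
Lemma bcap_proof : is_brauer bcap_fun.
Proof.
by apply/forallP => -[i|[]//]; rewrite !ffunE /= rev_ordK eqxx /= inj_eq;
  [exact: rev_ord2_neq | move=> ? ? []].
Qed.
Definition bcap : bdiag 2 0 := BDiag bcap_proof.

Definition bcup_fun : {ffun bpt 0 2 -> bpt 0 2} :=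
  [ffun x => match x with inl i => inl i | inr i => inr (rev_ord i) end].
Lemma bcup_proof : is_brauer bcup_fun.
Proof.
by apply/forallP => -[[]//|i]; rewrite !ffunE /= rev_ordK eqxx /= inj_eq;
  [exact: rev_ord2_neq | move=> ? ? []].
Qed.
Definition bcup : bdiag 0 2 := BDiag bcup_proof.

Definition bcupcap_fun : {ffun bpt 2 2 -> bpt 2 2} :=
  [ffun x => match x with inl i => inl (rev_ord i) | inr i => inr (rev_ord i) end].
Lemma bcupcap_proof : is_brauer bcupcap_fun.
Proof.
by apply/forallP => -[i|i]; rewrite !ffunE /= rev_ordK eqxx /= inj_eq;
  try exact: rev_ord2_neq; move=> ? ? [].
Qed.
Definition bcupcap : bdiag 2 2 := BDiag bcupcap_proof.

Inductive tm (K : Type) : nat -> nat -> Type :=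
| tI0 : tm K 0 0
| tH : tm K 1 1
| tcomp r s t : tm K s t -> tm K r s -> tm K r t
| ttens r s k l : tm K r s -> bdiag k l -> tm K (r + k) (s + l)
| tzero r s : tm K r s
| tadd r s : tm K r s -> tm K r s -> tm K r s
| tscale r s : K -> tm K r s -> tm K r s
| tcast r s r' s' : r = r' -> s = s' -> tm K r s -> tm K r' s'.

Arguments tI0 {K}.
Arguments tH {K}.
Arguments tcomp {K r s t}.
Arguments ttens {K r s k l}.
Arguments tzero {K r s}.
Arguments tadd {K r s}.
Arguments tscale {K r s}.
Arguments tcast {K r s r' s'}.

Section AB.
Variable K : comPzRingType.
Implicit Types (a b : K).

Definition tid r : tm K r r := ttens tI0 (bid r).
Definition tneg r s (D : tm K r s) := tscale (-1)%R D.
Definition tsub r s (D E : tm K r s) := tadd D (tneg E).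
Definition tcommut r (D E : tm K r r) := tsub (tcomp D E) (tcomp E D).
Fixpoint tpow r (D : tm K r r) (n : nat) : tm K r r :=
  match n with 0 => tid r | n'.+1 => tcomp D (tpow D n') end.
Definition tsum r s (F : nat -> tm K r s) (a b : nat) : tm K r s :=
  foldr (fun i acc => tadd (F i) acc) tzero (index_iota a b).

Definition tH01 : tm K 2 2 := ttens tH (bid 1).
Definition tX0 : tm K 2 2 := ttens tI0 bX.
Definition tH02 : tm K 2 2 := tcomp tX0 (tcomp tH01 tX0).
Definition tH12 : tm K 2 2 := tsub (ttens tI0 bX) (ttens tI0 bcupcap). (* I_0 (x) H *)
Definition tPi : tm K 2 0 := ttens tI0 bcap.
Definition tAmalg : tm K 0 2 := ttens tI0 bcup.
Definition ttrans (D : tm K 1 1) : tm K 1 1 :=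
  tcomp (ttens tPi (bid 1)) (tcomp (ttens D bX) (ttens tAmalg (bid 1))).

Variable delta : K.

Inductive abeq : forall r s, tm K r s -> tm K r s -> Prop :=
| ab_refl r s (D : tm K r s) : abeq D D
| ab_sym r s (D E : tm K r s) : abeq D E -> abeq E D
| ab_trans r s (D E F : tm K r s) : abeq D E -> abeq E F -> abeq D F
| ab_comp r s t (B B' : tm K s t) (A A' : tm K r s) :
    abeq B B' -> abeq A A' -> abeq (tcomp B A) (tcomp B' A')
| ab_tens r s k l (D D' : tm K r s) (b : bdiag k l) :
    abeq D D' -> abeq (ttens D b) (ttens D' b)
| ab_add r s (D D' E E' : tm K r s) :
    abeq D D' -> abeq E E' -> abeq (tadd D E) (tadd D' E')
| ab_scale r s a (D D' : tm K r s) : abeq D D' -> abeq (tscale a D) (tscale a D')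
| ab_cast r s r' s' (e1 : r = r') (e2 : s = s') (D D' : tm K r s) :
    abeq D D' -> abeq (tcast e1 e2 D) (tcast e1 e2 D')
| ab_cast_id r s (D : tm K r s) : abeq (tcast erefl erefl D) D
| ab_addA r s (D E F : tm K r s) : abeq (tadd D (tadd E F)) (tadd (tadd D E) F)
| ab_addC r s (D E : tm K r s) : abeq (tadd D E) (tadd E D)
| ab_add0 r s (D : tm K r s) : abeq (tadd tzero D) D
| ab_addN r s (D : tm K r s) : abeq (tadd D (tscale (-1)%R D)) tzero
| ab_scaleA r s a b (D : tm K r s) : abeq (tscale a (tscale b D)) (tscale (a * b)%R D)
| ab_scale1 r s (D : tm K r s) : abeq (tscale 1%R D) D
| ab_scale0 r s (D : tm K r s) : abeq (tscale 0%R D) tzero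
| ab_scaleDl r s a b (D : tm K r s) :
    abeq (tscale (a + b)%R D) (tadd (tscale a D) (tscale b D))
| ab_scaleDr r s a (D E : tm K r s) :
    abeq (tscale a (tadd D E)) (tadd (tscale a D) (tscale a E))
| ab_compA r s t u (C : tm K t u) (B : tm K s t) (A : tm K r s) :
    abeq (tcomp C (tcomp B A)) (tcomp (tcomp C B) A)
| ab_id_l r s (D : tm K r s) : abeq (tcomp (tid s) D) D
| ab_id_r r s (D : tm K r s) : abeq (tcomp D (tid r)) D
| ab_compDl r s t (B B' : tm K s t) (A : tm K r s) :
    abeq (tcomp (tadd B B') A) (tadd (tcomp B A) (tcomp B' A))
| ab_compDr r s t (B : tm K s t) (A A' : tm K r s) :
    abeq (tcomp B (tadd A A')) (tadd (tcomp B A) (tcomp B A'))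
| ab_compZl r s t a (B : tm K s t) (A : tm K r s) :
    abeq (tcomp (tscale a B) A) (tscale a (tcomp B A))
| ab_compZr r s t a (B : tm K s t) (A : tm K r s) :
    abeq (tcomp B (tscale a A)) (tscale a (tcomp B A))
| ab_tensD r s k l (D E : tm K r s) (b : bdiag k l) :
    abeq (ttens (tadd D E) b) (tadd (ttens D b) (ttens E b))
| ab_tensZ r s k l a (D : tm K r s) (b : bdiag k l) :
    abeq (ttens (tscale a D) b) (tscale a (ttens D b))
| ab_interchange r s t k l m (D : tm K s t) (D' : tm K r s)
    (b : bdiag l m) (b' : bdiag k l) n (c : bdiag k m) :
    bcomp b' b = Some (n, c) ->
    abeq (tcomp (ttens D b) (ttens D' b')) (tscale (delta ^+ n)%R (ttens (tcomp D D') c))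
| ab_tens_unit r s (D : tm K r s) :
    abeq (ttens D (bid 0)) (tcast (esym (addn0 r)) (esym (addn0 s)) D)
| ab_tens_assoc r s k l m n (D : tm K r s) (b : bdiag k l) (c : bdiag m n)
    (bc : bdiag (k + m) (l + n)) :
    btens b c = Some bc ->
    abeq (ttens (ttens D b) c) (tcast (addnA r k m) (addnA s l n) (ttens D bc))
| ab_rel_i0 k l m (A : bdiag k l) (B : bdiag l m) n (C : bdiag k m) :
    bcomp A B = Some (n, C) ->
    abeq (tcomp (ttens tI0 B) (ttens tI0 A)) (tscale (delta ^+ n)%R (ttens tI0 C))
| ab_rel_i1 k l m (A : bdiag k l) (B : bdiag l m) n (C : bdiag k m) :
    bcomp A B = Some (n, C) ->
    abeq (tcomp (ttens tH B) (ttens (tid 1) A)) (tscale (delta ^+ n)%R (ttens tH C))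
| ab_rel_i2 k l m (A : bdiag k l) (B : bdiag l m) n (C : bdiag k m) :
    bcomp A B = Some (n, C) ->
    abeq (tcomp (ttens (tid 1) B) (ttens tH A)) (tscale (delta ^+ n)%R (ttens tH C))
| ab_rel_ii : abeq (tcommut tH01 (tadd tH02 tH12)) tzero
| ab_rel_iii : abeq (ttrans tH) (tneg tH).

Definition tZ (l : nat) : tm K 0 0 := tcomp tPi (tcomp (ttens (tpow tH l) (bid 1)) tAmalg).
Definition tG (i : nat) : tm K 1 1 := tsub (ttens (tZ i) (bid 1)) (tpow tH i).
Definition tPhi : tm K 1 1 := tsub (tscale (1 - delta)%R (tid 1)) tH.

End AB.

Arguments abeq {K} delta {r s}.
Arguments tid {K} r.
Arguments tneg {K r s}.
Arguments tsub {K r s}.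
Arguments tcommut {K r}.
Arguments tpow {K r}.
Arguments tsum {K r s}.
Arguments tH01 {K}.
Arguments tX0 {K}.
Arguments tH02 {K}.
Arguments tH12 {K}.
Arguments tPi {K}.
Arguments tAmalg {K}.
Arguments ttrans {K}.
Arguments tZ {K}.
Arguments tG {K}.
Arguments tPhi {K}.

(* Write Y = H_02 + H_12; relation (ii) says that H_01 commutes with Y.  Bending
   the second thin strand of an endomorphism of 2 up over the top gives a map
   End(2) -> End(1) sending (D (x) I) X_0 to D^T, and the cap Pi absorbs Y as
   Phi (x) I, because (iii) gives Pi H_01 X_0 = - Pi H_01.  Hence
   c(k, m) = closure of (H^k (x) I) X_0 Y^m satisfies c(0, m) = Phi^m and, since
   X_0 Y = H_01 X_0 + 1 - cup cap,
     c(k, m + 1) = c(k + 1, m) + Phi^m H^k - (Z_k (x) I) Phi^m.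
   Telescoping down from (H^(l+1))^T = c(l + 1, 0) gives the first identity;
   bending the strand down under the bottom gives the mirror identity, and
   comparing the two (H commutes with Phi) gives the commutator identity. *)

From Pilot Require Import Defs.
Set Warnings "-notation-overridden,-ambiguous-paths".
From mathcomp Require Import all_boot all_order all_algebra.
From Stdlib Require Import Setoid Morphisms.
From mathcomp Require Import ring.

Set Implicit Arguments.
Unset Strict Implicit.
Unset Printing Implicit Defensive.
Import GRing.Theory.

(** * Evaluating composites of concrete Brauer diagrams *)

(* The enumerations of finite types and [split] are locked or built from opaque
   proofs; the transparent copies below let [vm_compute] evaluate [bcomp] and
   [btens] on concrete diagrams. *)
Definition ord_seq n : seq 'I_n := pmap (insub_eq 'I_n) (iota 0 n).

Lemma enum_ordE n : Finite.enum 'I_n = ord_seq n.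
Proof. by rewrite unlock /ord_seq (eq_pmap (insub_eqE 'I_n)). Qed.

Lemma enum_sumE (A B : finType) :
  Finite.enum (A + B)%type = map inl (Finite.enum A) ++ map inr (Finite.enum B).
Proof. by rewrite unlock /= /sum_enum unlock. Qed.

Definition bpt_seq r s : seq (bpt r s) := map inl (ord_seq r) ++ map inr (ord_seq s).

Lemma enum_bptE r s : Finite.enum (bpt r s) = bpt_seq r s.
Proof. by rewrite enum_sumE !enum_ordE. Qed.

Definition cpt_seq r s t : seq (cpt r s t) := map inl (bpt_seq r t) ++ map inr (ord_seq s).

Lemma enum_cptE r s t : Finite.enum (cpt r s t) = cpt_seq r s t.
Proof. by rewrite /cpt enum_sumE enum_bptE enum_ordE. Qed.

Lemma existsE (T : finType) (P : pred T) : [exists x, P x] = has P (Finite.enum T).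
Proof.
apply/existsP/hasP => [[x Px]|[x _ Px]]; last by exists x.
by exists x => //; rewrite -enumT mem_enum.
Qed.

Lemma forallE (T : finType) (P : pred T) : [forall x, P x] = all P (Finite.enum T).
Proof.
by rewrite -[LHS]negbK negb_forall existsE -all_predC; apply: eq_all => x /=; rewrite negbK.
Qed.

Lemma card_predE (T : finType) (P : pred T) : #|[pred x | P x]| = count P (Finite.enum T).
Proof. by rewrite cardE /enum_mem size_filter. Qed.

Definition connect_seq (T : finType) (elems : seq T) (e : rel T) (x y : T) :=
  y \in dfs (fun u => filter (e u) elems) (size elems) [::] x.

Lemma connectE (T : finType) (e : rel T) : connect e =2 connect_seq (Finite.enum T) e.
Proof.
by move=> x y; rewrite /connect /connect_seq /rgraph /= unlock /enum_mem /= size_filter count_predT.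
Qed.

Section ComputableComposition.
Variables (r s t : nat) (gd : bpt r s -> bpt r s) (ge : bpt s t -> bpt s t).

Definition cgraph_seq : rel (cpt r s t) := fun q q' =>
  has (fun p => (inj_lo t p == q) && (inj_lo t (gd p) == q')) (bpt_seq r s) ||
  has (fun p => (inj_hi r p == q) && (inj_hi r (ge p) == q')) (bpt_seq s t).

Definition cconnect_seq := connect_seq (cpt_seq r s t) cgraph_seq.

Definition bcomp_fun_seq (x : bpt r t) : bpt r t :=
  odflt x (ohead [seq y <- bpt_seq r t | (y != x) && cconnect_seq (inl x) (inl y)]).

Definition croot_seq (x : cpt r s t) : cpt r s t :=
  odflt x (ohead (filter (cconnect_seq x) (cpt_seq r s t))).

Definition bcomp_loops_seq : nat :=
  count (fun m => (croot_seq (inr m) == inr m) &&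
                  ~~ has (fun y => cconnect_seq (inr m) (inl y)) (bpt_seq r t)) (ord_seq s).

End ComputableComposition.

Lemma bcomp_eval r s t (d : bdiag r s) (e : bdiag s t) gd ge n (c : bdiag r t) gc :
  d =1 gd -> e =1 ge -> c =1 gc ->
  (bcomp_loops_seq gd ge == n) && all (fun x => bcomp_fun_seq gd ge x == gc x) (bpt_seq r t) ->
  bcomp d e = Some (n, c).
Proof.
move=> dE eE cE /andP[/eqP loopsE /allP funE].
have graphE : cgraph d e =2 cgraph_seq gd ge.
  by move=> q q'; rewrite /cgraph /cgraph_seq !existsE !enum_bptE;
     congr (_ || _); apply: eq_has => p; rewrite ?dE ?eE.
have connE x y : connect (cgraph d e) x y = cconnect_seq gd ge x y.
  by rewrite (eq_connect graphE) connectE enum_cptE.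
have bfunE : [ffun x => bcomp_fun d e x] = bfun c.
  apply/ffunP => x; rewrite ffunE cE -(eqP (funE x _)) -?enum_bptE -?enumT ?mem_enum //.
  rewrite /bcomp_fun /bcomp_fun_seq /pick /enum_mem enum_bptE.
  by congr (odflt _ (ohead _)); apply: eq_filter => y; rewrite -connE.
rewrite /bcomp bfunE valK -loopsE /bcomp_loops card_predE enum_ordE; congr (Some (_, _)).
apply: eq_count => m.
rewrite /= /fingraph.root /croot_seq /pick /enum_mem enum_cptE existsE enum_bptE.
congr (((odflt _ (ohead _)) == _) && ~~ _); first by apply: eq_filter => y; rewrite -connE.
by apply: eq_has => y; rewrite connE.
Qed.

Lemma split_seq_subproof m n (i : 'I_(m + n)) : (i < m) = false -> i - m < n.
Proof. by move=> H; rewrite ltn_subLR ?ltn_ord // leqNgt H. Qed.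

Definition split_seq m n (i : 'I_(m + n)) : 'I_m + 'I_n :=
  (if (i : nat) < m as b return ((i : nat) < m = b -> 'I_m + 'I_n)
   then fun H => inl (Ordinal H) else fun H => inr (Ordinal (split_seq_subproof H))) (erefl _).

Lemma split_seqE m n (i : 'I_(m + n)) : split_seq i = split i.
Proof.
rewrite /split_seq /split; move: (erefl (i < m)); case: {2 3}(i < m) => H;
  case: (ltnP i m) => H'; try by congr (_ _); apply: val_inj.
- by exfalso; move: H'; rewrite leqNgt H.
- by exfalso; move: H'; rewrite H.
Qed.

Definition btens_fun_seq r s k l (gd : bpt r s -> bpt r s) (ge : bpt k l -> bpt k l)
    (x : bpt (r + k) (s + l)) : bpt (r + k) (s + l) :=
  match x with
  | inl i => match split_seq i with
             | inl i1 => lift_l k l (gd (inl i1)) | inr i2 => lift_r r s (ge (inl i2)) end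
  | inr j => match split_seq j with
             | inl j1 => lift_l k l (gd (inr j1)) | inr j2 => lift_r r s (ge (inr j2)) end
  end.

Lemma btens_eval r s k l (d : bdiag r s) (e : bdiag k l) gd ge (c : bdiag (r + k) (s + l)) gc :
  d =1 gd -> e =1 ge -> c =1 gc ->
  all (fun x => btens_fun_seq gd ge x == gc x) (bpt_seq (r + k) (s + l)) ->
  btens d e = Some c.
Proof.
move=> dE eE cE /allP funE; rewrite /btens (_ : finfun _ = bfun c) ?valK //.
apply/ffunP => x; rewrite ffunE cE -(eqP (funE x _)) -?enum_bptE -?enumT ?mem_enum //.
by case: x => [i|j] /=; rewrite split_seqE; case: split => ? /=; rewrite ?dE ?eE.
Qed.

(* A diagram given by a table: points are numbered 0, ..., r - 1 along the bottom
   and r, ..., r + s - 1 along the top, and entry [x] of the table is the partner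
   of point [x]. *)
Definition bpt_code r s (x : bpt r s) : nat :=
  match x with inl i => val i | inr j => r + val j end.

Definition tab_fun r s (tbl : seq nat) (x : bpt r s) : bpt r s :=
  nth x (bpt_seq r s) (nth 0 tbl (bpt_code x)).
Arguments tab_fun r s tbl x : clear implicits.

Definition tab_valid r s tbl : bool :=
  all (fun x => (tab_fun r s tbl (tab_fun r s tbl x) == x) && (tab_fun r s tbl x != x))
      (bpt_seq r s).

Lemma tab_brauer r s tbl : tab_valid r s tbl -> is_brauer [ffun x => tab_fun r s tbl x].
Proof.
by move=> H; rewrite /is_brauer forallE enum_bptE; apply: sub_all H => x; rewrite !ffunE.
Qed.

Definition tab_diag r s tbl (H : tab_valid r s tbl) : bdiag r s := BDiag (tab_brauer H).

Definition bIX := @tab_diag 3 3 [:: 3; 5; 4; 0; 2; 1] erefl.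
Definition bXI := @tab_diag 3 3 [:: 4; 3; 5; 1; 0; 2] erefl.
Definition bcupI := @tab_diag 1 3 [:: 3; 2; 1; 0] erefl.
Definition bIcup := @tab_diag 1 3 [:: 1; 0; 3; 2] erefl.
Definition bcapI := @tab_diag 3 1 [:: 1; 0; 3; 2] erefl.
Definition bIcap := @tab_diag 3 1 [:: 3; 2; 1; 0] erefl.
Definition bcup_straddle := @tab_diag 1 3 [:: 2; 3; 0; 1] erefl.
Definition bcap_straddle := @tab_diag 3 1 [:: 2; 3; 0; 1] erefl.
Definition bcapII := @tab_diag 4 2 [:: 1; 0; 4; 5; 2; 3] erefl.
Definition bIIcap := @tab_diag 4 2 [:: 4; 5; 3; 2; 0; 1] erefl.
Definition bcapcap := @tab_diag 4 0 [:: 1; 0; 3; 2] erefl.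
Definition bcupII := @tab_diag 2 4 [:: 4; 5; 3; 2; 0; 1] erefl.
Definition bIIcup := @tab_diag 2 4 [:: 2; 3; 0; 1; 5; 4] erefl.
Definition bcupcup := @tab_diag 0 4 [:: 1; 0; 3; 2] erefl.
Definition bIcupI := @tab_diag 2 4 [:: 2; 5; 0; 4; 3; 1] erefl.
Definition bIcapI := @tab_diag 4 2 [:: 4; 2; 1; 5; 0; 3] erefl.

Ltac diag_fun := move=> ?; rewrite /= ffunE; reflexivity.
Ltac solve_bcomp := apply: bcomp_eval; [diag_fun | diag_fun | diag_fun | vm_compute; reflexivity].
Ltac solve_btens := apply: btens_eval; [diag_fun | diag_fun | diag_fun | vm_compute; reflexivity].

Lemma btens_bid1_bid1 : btens (bid 1) (bid 1) = Some (bid 2). Proof. solve_btens. Qed.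
Lemma btens_bid1_bX : btens (bid 1) bX = Some bIX. Proof. solve_btens. Qed.
Lemma btens_bX_bid1 : btens bX (bid 1) = Some bXI. Proof. solve_btens. Qed.
Lemma btens_bcup_bid1 : btens bcup (bid 1) = Some bcupI. Proof. solve_btens. Qed.
Lemma btens_bid1_bcup : btens (bid 1) bcup = Some bIcup. Proof. solve_btens. Qed.
Lemma btens_bcap_bid1 : btens bcap (bid 1) = Some bcapI. Proof. solve_btens. Qed.
Lemma btens_bid1_bcap : btens (bid 1) bcap = Some bIcap. Proof. solve_btens. Qed.
Lemma btens_bcapI_bid1 : btens bcapI (bid 1) = Some bcapII. Proof. solve_btens. Qed.
Lemma btens_bid2_bcap : btens (bid 2) bcap = Some bIIcap. Proof. solve_btens. Qed.
Lemma btens_bIcup_bid1 : btens bIcup (bid 1) = Some bIcupI. Proof. solve_btens. Qed.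
Lemma btens_bcupI_bid1 : btens bcupI (bid 1) = Some bcupII. Proof. solve_btens. Qed.
Lemma btens_bid2_bcup : btens (bid 2) bcup = Some bIIcup. Proof. solve_btens. Qed.
Lemma btens_bIcap_bid1 : btens bIcap (bid 1) = Some bIcapI. Proof. solve_btens. Qed.

Lemma bcomp_bX_bX : bcomp bX bX = Some (0, bid 2). Proof. solve_bcomp. Qed.
Lemma bcomp_bX_bid2 : bcomp bX (bid 2) = Some (0, bX). Proof. solve_bcomp. Qed.
Lemma bcomp_bid2_bX : bcomp (bid 2) bX = Some (0, bX). Proof. solve_bcomp. Qed.
Lemma bcomp_bid1_bid1 : bcomp (bid 1) (bid 1) = Some (0, bid 1). Proof. solve_bcomp. Qed.
Lemma bcomp_bcupI_bIX : bcomp bcupI bIX = Some (0, bcup_straddle). Proof. solve_bcomp. Qed.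
Lemma bcomp_bIcup_bXI : bcomp bIcup bXI = Some (0, bcup_straddle). Proof. solve_bcomp. Qed.
Lemma bcomp_bIX_bcapI : bcomp bIX bcapI = Some (0, bcap_straddle). Proof. solve_bcomp. Qed.
Lemma bcomp_bXI_bIcap : bcomp bXI bIcap = Some (0, bcap_straddle). Proof. solve_bcomp. Qed.
Lemma bcomp_bX_bcap : bcomp bX bcap = Some (0, bcap). Proof. solve_bcomp. Qed.
Lemma bcomp_bcap_bcup : bcomp bcap bcup = Some (0, bcupcap). Proof. solve_bcomp. Qed.
Lemma bcomp_bcupcap_bcap : bcomp bcupcap bcap = Some (1, bcap). Proof. solve_bcomp. Qed.
Lemma bcomp_bIcup_bcapI : bcomp bIcup bcapI = Some (0, bid 1). Proof. solve_bcomp. Qed.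
Lemma bcomp_bcup_bX : bcomp bcup bX = Some (0, bcup). Proof. solve_bcomp. Qed.
Lemma bcomp_bcup_bcupcap : bcomp bcup bcupcap = Some (1, bcup). Proof. solve_bcomp. Qed.
Lemma bcomp_bcupI_bIcap : bcomp bcupI bIcap = Some (0, bid 1). Proof. solve_bcomp. Qed.
Lemma bcomp_bcupcap_bX : bcomp bcupcap bX = Some (0, bcupcap). Proof. solve_bcomp. Qed.
Lemma bcomp_bX_bcupcap : bcomp bX bcupcap = Some (0, bcupcap). Proof. solve_bcomp. Qed.
Lemma bcomp_bcapII_bcap : bcomp bcapII bcap = Some (0, bcapcap). Proof. solve_bcomp. Qed.
Lemma bcomp_bIIcap_bcap : bcomp bIIcap bcap = Some (0, bcapcap). Proof. solve_bcomp. Qed.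
Lemma bcomp_bid2_bcap : bcomp (bid 2) bcap = Some (0, bcap). Proof. solve_bcomp. Qed.
Lemma bcomp_bcap_bid0 : bcomp bcap (bid 0) = Some (0, bcap). Proof. solve_bcomp. Qed.
Lemma bcomp_bIcupI_bIIcap : bcomp bIcupI bIIcap = Some (0, bid 2). Proof. solve_bcomp. Qed.
Lemma bcomp_bcup_bcupII : bcomp bcup bcupII = Some (0, bcupcup). Proof. solve_bcomp. Qed.
Lemma bcomp_bcup_bIIcup : bcomp bcup bIIcup = Some (0, bcupcup). Proof. solve_bcomp. Qed.
Lemma bcomp_bcup_bid2 : bcomp bcup (bid 2) = Some (0, bcup). Proof. solve_bcomp. Qed.
Lemma bcomp_bid0_bcup : bcomp (bid 0) bcup = Some (0, bcup). Proof. solve_bcomp. Qed.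
Lemma bcomp_bIIcup_bIcapI : bcomp bIIcup bIcapI = Some (0, bid 2). Proof. solve_bcomp. Qed.
Lemma bcomp_bcup_bcap : bcomp bcup bcap = Some (1, bid 0). Proof. solve_bcomp. Qed.

(** * Rewriting modulo the defining relations *)

Add Parametric Relation (K : comPzRingType) (delta : K) r s : (tm K r s) (@abeq K delta r s)
  reflexivity proved by (@ab_refl K delta r s)
  symmetry proved by (@ab_sym K delta r s)
  transitivity proved by (@ab_trans K delta r s) as abeq_rel.

#[export] Hint Resolve ab_refl : core.

Add Parametric Morphism (K : comPzRingType) (delta : K) r s t : (@tcomp K r s t)
  with signature abeq delta ==> abeq delta ==> abeq delta as tcomp_mor.
Proof. by move=> *; apply: ab_comp. Qed.

Add Parametric Morphism (K : comPzRingType) (delta : K) r s k l : (@ttens K r s k l)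
  with signature abeq delta ==> eq ==> abeq delta as ttens_mor.
Proof. by move=> *; apply: ab_tens. Qed.

Add Parametric Morphism (K : comPzRingType) (delta : K) r s : (@tadd K r s)
  with signature abeq delta ==> abeq delta ==> abeq delta as tadd_mor.
Proof. by move=> *; apply: ab_add. Qed.

Add Parametric Morphism (K : comPzRingType) (delta : K) r s a : (@tscale K r s a)
  with signature abeq delta ==> abeq delta as tscale_mor.
Proof. by move=> *; apply: ab_scale. Qed.

Add Parametric Morphism (K : comPzRingType) (delta : K) r s : (@tneg K r s)
  with signature abeq delta ==> abeq delta as tneg_mor.
Proof. by move=> *; apply: ab_scale. Qed.

Add Parametric Morphism (K : comPzRingType) (delta : K) r s : (@tsub K r s)
  with signature abeq delta ==> abeq delta ==> abeq delta as tsub_mor.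
Proof. by move=> *; apply: ab_add => //; apply: ab_scale. Qed.

Add Parametric Morphism (K : comPzRingType) (delta : K) r : (@tpow K r)
  with signature abeq delta ==> eq ==> abeq delta as tpow_mor.
Proof. by move=> D E DE; elim=> //= n IH; apply: ab_comp. Qed.

Local Open Scope ring_scope.

Section LinearCombinations.
Variables (K : comPzRingType) (delta : K) (r s : nat).
Local Notation "A ≡ B" := (abeq delta A B) (at level 70).
Implicit Types (A B C D : tm K r s).

Lemma taddA A B C : tadd A (tadd B C) ≡ tadd (tadd A B) C. Proof. exact: ab_addA. Qed.
Lemma taddC A B : tadd A B ≡ tadd B A. Proof. exact: ab_addC. Qed.
Lemma tadd0 A : tadd tzero A ≡ A. Proof. exact: ab_add0. Qed.
Lemma taddr0 A : tadd A tzero ≡ A. Proof. by rewrite taddC tadd0. Qed.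
Lemma taddACA A B C D : tadd (tadd A B) (tadd C D) ≡ tadd (tadd A C) (tadd B D).
Proof. by rewrite -!taddA (taddA B C) (taddC B C) -taddA. Qed.
Lemma tscale0 A : tscale 0 A ≡ tzero. Proof. exact: ab_scale0. Qed.
Lemma tscale1 A : tscale 1 A ≡ A. Proof. exact: ab_scale1. Qed.
Lemma tscaleA a b A : tscale a (tscale b A) ≡ tscale (a * b) A. Proof. exact: ab_scaleA. Qed.
Lemma tscaleDl a b A : tscale (a + b) A ≡ tadd (tscale a A) (tscale b A).
Proof. exact: ab_scaleDl. Qed.
Lemma tscaleDr a A B : tscale a (tadd A B) ≡ tadd (tscale a A) (tscale a B).
Proof. exact: ab_scaleDr. Qed.
Lemma tscaler0 a : tscale a (@tzero K r s) ≡ tzero.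
Proof. by rewrite -(tscale0 tzero) tscaleA mulr0. Qed.

Inductive lexpr :=
| LAtom of nat | LZero | LAdd of lexpr & lexpr | LScale of K & lexpr
| LSub of lexpr & lexpr | LNeg of lexpr.

Fixpoint leval (env : seq (tm K r s)) e : tm K r s :=
  match e with
  | LAtom i => nth tzero env i
  | LZero => tzero
  | LAdd a b => tadd (leval env a) (leval env b)
  | LScale c a => tscale c (leval env a)
  | LSub a b => tsub (leval env a) (leval env b)
  | LNeg a => tneg (leval env a)
  end.

Fixpoint lcoef e (j : nat) : K :=
  match e with
  | LAtom i => (j == i)%:R
  | LZero => 0
  | LAdd a b => lcoef a j + lcoef b j
  | LScale c a => c * lcoef a j
  | LSub a b => lcoef a j - lcoef b j
  | LNeg a => - lcoef a j
  end.

Definition lcomb (env : seq (tm K r s)) js (f : nat -> K) : tm K r s :=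
  foldr (fun j acc => tadd (tscale (f j) (nth tzero env j)) acc) tzero js.

Lemma eq_in_lcomb env js f g : {in js, f =1 g} -> lcomb env js f = lcomb env js g.
Proof.
elim: js => //= j js IH fg; rewrite fg ?mem_head // IH // => x x_js.
by apply: fg; rewrite in_cons x_js orbT.
Qed.

Lemma lcomb0 env js : lcomb env js (fun=> 0) ≡ tzero.
Proof. by elim: js => //= j js IH; rewrite IH tscale0 tadd0. Qed.

Lemma lcombD env js f g :
  lcomb env js (fun j => f j + g j) ≡ tadd (lcomb env js f) (lcomb env js g).
Proof. by elim: js => [|j js IH] /=; rewrite ?tadd0 // IH tscaleDl taddACA. Qed.

Lemma lcombZ env js c f : lcomb env js (fun j => c * f j) ≡ tscale c (lcomb env js f).
Proof. by elim: js => [|j js IH] /=; rewrite ?tscaler0 // IH tscaleDr tscaleA. Qed.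

Lemma lcombN env js f : lcomb env js (fun j => - f j) ≡ tneg (lcomb env js f).
Proof.
by rewrite /tneg -lcombZ (@eq_in_lcomb _ _ _ (fun j => -1 * f j)) // => j _; rewrite mulN1r.
Qed.

Lemma lcomb_delta env js i : uniq js ->
  lcomb env js (fun j => (j == i)%:R) ≡ if i \in js then nth tzero env i else tzero.
Proof.
elim: js => [|j js IH] //= /andP[jNjs js_uniq]; rewrite IH // in_cons.
have [<-|_] /= := eqVneq j i; first by rewrite (negbTE jNjs) tscale1 taddr0.
by rewrite tscale0 tadd0.
Qed.

Lemma leval_lcomb env e : leval env e ≡ lcomb env (iota 0 (size env)) (lcoef e).
Proof.
elim: e => [i||a IHa b IHb|c a IHa|a IHa b IHb|a IHa] /=.
- rewrite lcomb_delta ?iota_uniq // mem_iota add0n /=.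
  by case: ltnP => // H; rewrite nth_default.
- by rewrite lcomb0.
- by rewrite lcombD IHa IHb.
- by rewrite lcombZ IHa.
- by rewrite lcombD lcombN IHa IHb.
- by rewrite lcombN IHa.
Qed.

Lemma leval_eq env e1 e2 :
  map (lcoef e1) (iota 0 (size env)) = map (lcoef e2) (iota 0 (size env)) ->
  leval env e1 ≡ leval env e2.
Proof. by move=> /eq_in_map H; rewrite !leval_lcomb (eq_in_lcomb _ H). Qed.

End LinearCombinations.

Ltac lindex x env n :=
  lazymatch env with
  | nil => constr:((false, n))
  | cons ?y ?rest =>
      let b := constr:(ltac:(tryif unify x y then exact true else exact false) : bool) in
      lazymatch b with
      | true => constr:((true, n))
      | false => lindex x rest (S n)
      end
  end.

Ltac lsnoc env x :=
  lazymatch env with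
  | nil => constr:(cons x nil)
  | cons ?y ?rest => let r := lsnoc rest x in constr:(cons y r)
  end.

Ltac lreify K env t :=
  lazymatch t with
  | @tadd _ _ _ ?a ?b =>
      lazymatch lreify K env a with (?env1, ?ea) =>
      lazymatch lreify K env1 b with (?env2, ?eb) => constr:((env2, LAdd ea eb)) end end
  | @tsub _ _ _ ?a ?b =>
      lazymatch lreify K env a with (?env1, ?ea) =>
      lazymatch lreify K env1 b with (?env2, ?eb) => constr:((env2, LSub ea eb)) end end
  | @tscale _ _ _ ?c ?a =>
      lazymatch lreify K env a with (?env1, ?ea) => constr:((env1, LScale c ea)) end
  | @tneg _ _ _ ?a =>
      lazymatch lreify K env a with (?env1, ?ea) => constr:((env1, LNeg ea)) end
  | @tzero _ _ _ => constr:((env, @LZero K))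
  | _ =>
      lazymatch lindex t env O with
      | (true, ?n) => constr:((env, @LAtom K n))
      | (false, ?n) => let env' := lsnoc env t in constr:((env', @LAtom K n))
      end
  end.

Ltac lcoef_eq :=
  lazymatch goal with
  | |- [::] = [::] => reflexivity
  | |- _ :: _ = _ :: _ => apply: (f_equal2 cons); [ring | lcoef_eq]
  end.

(* Proves [A ≡ B] when both sides are equal as formal K-linear combinations of atoms,
   an atom being any subterm not built from [tadd], [tsub], [tscale], [tneg], [tzero]. *)
Ltac tlinear :=
  lazymatch goal with |- @abeq ?K ?d ?r ?s ?A ?B =>
    lazymatch lreify K (@nil (tm K r s)) A with (?env1, ?eA) =>
    lazymatch lreify K env1 B with (?env2, ?eB) =>
      change (@abeq K d r s (leval env2 eA) (leval env2 eB));
      apply: leval_eq; rewrite /=; lcoef_eq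
  end end end.

(** * The polar Brauer category *)

Definition tcap_out (K : comPzRingType) (E : tm K 2 2) : tm K 1 1 :=
  tcomp (ttens tPi (bid 1)) (tcomp (ttens E (bid 1)) (ttens (tid 1) bcup)).

Definition tcup_in (K : comPzRingType) (E : tm K 2 2) : tm K 1 1 :=
  tcomp (ttens (tid 1) bcap) (tcomp (ttens E (bid 1)) (ttens tAmalg (bid 1))).

Add Parametric Morphism (K : comPzRingType) (delta : K) : (@tcap_out K)
  with signature abeq delta ==> abeq delta as tcap_out_mor.
Proof. by move=> E E' EE'; rewrite /tcap_out EE'. Qed.

Add Parametric Morphism (K : comPzRingType) (delta : K) : (@tcup_in K)
  with signature abeq delta ==> abeq delta as tcup_in_mor.
Proof. by move=> E E' EE'; rewrite /tcup_in EE'. Qed.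

Section PolarBrauer.
Variables (K : comPzRingType) (delta : K).
Local Notation "A ≡ B" := (abeq delta A B) (at level 70).
Local Notation I0 b := (ttens tI0 b).
Local Notation i1 := (bid 1).

(* [tcast] alone would denote the tuple cast of MathComp. *)
Lemma tcast_id r s (e1 : r = r) (e2 : s = s) (D : tm K r s) : Defs.tcast e1 e2 D ≡ D.
Proof.
have -> : e1 = erefl by apply: eq_irrelevance.
have -> : e2 = erefl by apply: eq_irrelevance.
exact: ab_cast_id.
Qed.

Lemma tcompA r s t u (C : tm K t u) (B : tm K s t) (A : tm K r s) :
  tcomp C (tcomp B A) ≡ tcomp (tcomp C B) A.
Proof. exact: ab_compA. Qed.

Lemma tcomp1l r s (D : tm K r s) : tcomp (tid s) D ≡ D. Proof. exact: ab_id_l. Qed.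
Lemma tcomp1r r s (D : tm K r s) : tcomp D (tid r) ≡ D. Proof. exact: ab_id_r. Qed.

Lemma tcompDl r s t (B B' : tm K s t) (A : tm K r s) :
  tcomp (tadd B B') A ≡ tadd (tcomp B A) (tcomp B' A).
Proof. exact: ab_compDl. Qed.

Lemma tcompDr r s t (B : tm K s t) (A A' : tm K r s) :
  tcomp B (tadd A A') ≡ tadd (tcomp B A) (tcomp B A').
Proof. exact: ab_compDr. Qed.

Lemma tcompZl r s t a (B : tm K s t) (A : tm K r s) :
  tcomp (tscale a B) A ≡ tscale a (tcomp B A).
Proof. exact: ab_compZl. Qed.

Lemma tcompZr r s t a (B : tm K s t) (A : tm K r s) :
  tcomp B (tscale a A) ≡ tscale a (tcomp B A).
Proof. exact: ab_compZr. Qed.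

Lemma tcompBl r s t (B B' : tm K s t) (A : tm K r s) :
  tcomp (tsub B B') A ≡ tsub (tcomp B A) (tcomp B' A).
Proof. by rewrite /tsub /tneg tcompDl tcompZl. Qed.

Lemma tcompBr r s t (B : tm K s t) (A A' : tm K r s) :
  tcomp B (tsub A A') ≡ tsub (tcomp B A) (tcomp B A').
Proof. by rewrite /tsub /tneg tcompDr tcompZr. Qed.

Lemma ttensD r s k l (D E : tm K r s) (b : bdiag k l) :
  ttens (tadd D E) b ≡ tadd (ttens D b) (ttens E b).
Proof. exact: ab_tensD. Qed.

Lemma ttensZ r s k l a (D : tm K r s) (b : bdiag k l) :
  ttens (tscale a D) b ≡ tscale a (ttens D b).
Proof. exact: ab_tensZ. Qed.

Lemma ttensB r s k l (D E : tm K r s) (b : bdiag k l) :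
  ttens (tsub D E) b ≡ tsub (ttens D b) (ttens E b).
Proof. by rewrite /tsub /tneg ttensD ttensZ. Qed.

Lemma tinterchange r s t k l m (D : tm K s t) (D' : tm K r s) (b : bdiag l m)
    (b' : bdiag k l) c :
  bcomp b' b = Some (0%N, c) -> tcomp (ttens D b) (ttens D' b') ≡ ttens (tcomp D D') c.
Proof. by move=> H; rewrite (ab_interchange _ _ _ H) expr0 tscale1. Qed.

Lemma tcompI0 k l m (A : bdiag k l) (B : bdiag l m) C :
  bcomp A B = Some (0%N, C) -> tcomp (I0 B) (I0 A) ≡ I0 C.
Proof. by move=> H; rewrite (ab_rel_i0 _ H) expr0 tscale1. Qed.

Lemma tcompI0_loop k l m (A : bdiag k l) (B : bdiag l m) C :
  bcomp A B = Some (1%N, C) -> tcomp (I0 B) (I0 A) ≡ tscale delta (I0 C).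
Proof. by move=> H; rewrite (ab_rel_i0 _ H) expr1. Qed.

Lemma ttens_bid1M r s t (A : tm K s t) (B : tm K r s) :
  tcomp (ttens A (bid 1)) (ttens B (bid 1)) ≡ ttens (tcomp A B) (bid 1).
Proof. exact: tinterchange bcomp_bid1_bid1. Qed.

Lemma ttensI0A k l m n (b : bdiag k l) (c : bdiag m n) bc :
  btens b c = Some bc -> ttens (I0 b) c ≡ I0 bc.
Proof. by move=> H; rewrite (ab_tens_assoc _ _ H) tcast_id. Qed.

(* Stated for numerals only: for a variable [r] the general version needs a cast,
   and its rewrite pattern with index [r + 1] does not match an index [2]. *)
Lemma ttens_bid1_bid1_1 (D : tm K 1 1) : ttens (ttens D i1) i1 ≡ ttens D (bid 2).
Proof. by apply: ab_trans (ab_tens_assoc _ _ btens_bid1_bid1) _; apply: tcast_id. Qed.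

Lemma ttens_bid1_bid1_2 (D : tm K 2 2) : ttens (ttens D i1) i1 ≡ ttens D (bid 2).
Proof. by apply: ab_trans (ab_tens_assoc _ _ btens_bid1_bid1) _; apply: tcast_id. Qed.

Lemma ttens_bid0_0 : I0 (bid 0) ≡ tI0.
Proof. by apply: ab_trans (ab_tens_unit _ _) _; apply: tcast_id. Qed.

Lemma ttens_bid0_1 (D : tm K 1 1) : ttens D (bid 0) ≡ D.
Proof. by apply: ab_trans (ab_tens_unit _ _) _; apply: tcast_id. Qed.

Lemma ttens_bid0_2 (D : tm K 2 2) : ttens D (bid 0) ≡ D.
Proof. by apply: ab_trans (ab_tens_unit _ _) _; apply: tcast_id. Qed.

Lemma tpowSr r (D : tm K r r) n : tpow D n.+1 ≡ tcomp (tpow D n) D.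
Proof. by elim: n => [|n IH] /=; rewrite ?tcomp1l ?tcomp1r // [X in tcomp D X]IH tcompA. Qed.

Lemma tcomm_pow r (A B : tm K r r) m :
  tcomp A B ≡ tcomp B A -> tcomp A (tpow B m) ≡ tcomp (tpow B m) A.
Proof.
move=> AB; elim: m => [|m IH] /=; first by rewrite tcomp1l tcomp1r.
by rewrite tcompA AB -tcompA IH tcompA.
Qed.

Local Notation tcupR := (ttens (tid 1) bcup).
Local Notation tcapR := (ttens (tid 1) bcap).

Lemma tcap_outD (E F : tm K 2 2) : tcap_out (tadd E F) ≡ tadd (tcap_out E) (tcap_out F).
Proof. by rewrite /tcap_out ttensD tcompDl tcompDr. Qed.

Lemma tcap_outB (E F : tm K 2 2) : tcap_out (tsub E F) ≡ tsub (tcap_out E) (tcap_out F).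
Proof. by rewrite /tcap_out ttensB tcompBl tcompBr. Qed.

Lemma tcup_inD (E F : tm K 2 2) : tcup_in (tadd E F) ≡ tadd (tcup_in E) (tcup_in F).
Proof. by rewrite /tcup_in ttensD tcompDl tcompDr. Qed.

Lemma tcup_inB (E F : tm K 2 2) : tcup_in (tsub E F) ≡ tsub (tcup_in E) (tcup_in F).
Proof. by rewrite /tcup_in ttensB tcompBl tcompBr. Qed.

Lemma ttrans_tcap_out (D : tm K 1 1) : ttrans D ≡ tcap_out (tcomp (ttens D i1) tX0).
Proof.
rewrite /ttrans /tcap_out /tPi /tAmalg /tX0; apply: ab_comp => //.
have -> : ttens D bX ≡ tcomp (ttens D (bid 2)) (ttens (tid 1) bX).
  by rewrite (tinterchange _ _ bcomp_bX_bid2) tcomp1r.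
rewrite /tid (ttensI0A btens_bid1_bX) (ttensI0A btens_bcup_bid1).
rewrite -tcompA (tcompI0 bcomp_bcupI_bIX) -ttens_bid1M ttens_bid1_bid1_1.
by rewrite (ttensI0A btens_bX_bid1) (ttensI0A btens_bid1_bcup) -tcompA (tcompI0 bcomp_bIcup_bXI).
Qed.

Lemma ttrans_tcup_in (D : tm K 1 1) : ttrans D ≡ tcup_in (tcomp tX0 (ttens D i1)).
Proof.
rewrite /ttrans /tcup_in /tPi /tAmalg /tX0.
have -> : ttens D bX ≡ tcomp (ttens (tid 1) bX) (ttens D (bid 2)).
  by rewrite (tinterchange _ _ bcomp_bid2_bX) tcomp1l.
rewrite /tid (ttensI0A btens_bid1_bX) (ttensI0A btens_bcup_bid1) (ttensI0A btens_bcap_bid1).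
rewrite !tcompA (tcompI0 bcomp_bIX_bcapI) -ttens_bid1M ttens_bid1_bid1_1.
by rewrite (ttensI0A btens_bX_bid1) (ttensI0A btens_bid1_bcap) !tcompA (tcompI0 bcomp_bXI_bIcap).
Qed.

Lemma tPi_X0 : tcomp tPi tX0 ≡ tPi. Proof. exact: tcompI0 bcomp_bX_bcap. Qed.
Lemma tX0_Amalg : tcomp tX0 tAmalg ≡ tAmalg. Proof. exact: tcompI0 bcomp_bcup_bX. Qed.

Lemma tcap_out_congr (A B E : tm K 2 2) :
  tcomp tPi A ≡ tcomp tPi B -> tcap_out (tcomp A E) ≡ tcap_out (tcomp B E).
Proof.
have split_out C :
    tcap_out (tcomp C E) ≡ tcomp (ttens (tcomp tPi C) i1) (tcomp (ttens E i1) tcupR).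
  by rewrite /tcap_out -!ttens_bid1M !tcompA.
by move=> AB; rewrite !split_out AB.
Qed.

Lemma tcup_in_congr (A B E : tm K 2 2) :
  tcomp A tAmalg ≡ tcomp B tAmalg -> tcup_in (tcomp E A) ≡ tcup_in (tcomp E B).
Proof.
have split_in C :
    tcup_in (tcomp E C) ≡ tcomp tcapR (tcomp (ttens E i1) (ttens (tcomp C tAmalg) i1)).
  by rewrite /tcup_in -(ttens_bid1M E C) -(ttens_bid1M C tAmalg) !tcompA.
by move=> AB; rewrite !split_in AB.
Qed.

Lemma tcap_out_X0 (E : tm K 2 2) : tcap_out (tcomp tX0 E) ≡ tcap_out E.
Proof. by rewrite (@tcap_out_congr _ (tid 2)) ?tcomp1l // tPi_X0 tcomp1r. Qed.

Lemma tcup_in_X0 (E : tm K 2 2) : tcup_in (tcomp E tX0) ≡ tcup_in E.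
Proof. by rewrite (@tcup_in_congr _ (tid 2)) ?tcomp1r // tX0_Amalg tcomp1l. Qed.

Lemma tcupR_natural (F : tm K 1 1) : tcomp (ttens (ttens F i1) i1) tcupR ≡ tcomp tcupR F.
Proof.
rewrite ttens_bid1_bid1_1 (tinterchange F (tid 1) bcomp_bcup_bid2) tcomp1r.
by rewrite -{2}(ttens_bid0_1 F) (tinterchange (tid 1) F bcomp_bid0_bcup) tcomp1l.
Qed.

Lemma tcapR_natural (F : tm K 1 1) : tcomp tcapR (ttens (ttens F i1) i1) ≡ tcomp F tcapR.
Proof.
rewrite ttens_bid1_bid1_1 (tinterchange (tid 1) F bcomp_bid2_bcap) tcomp1l.
by rewrite -{2}(ttens_bid0_1 F) (tinterchange F (tid 1) bcomp_bcap_bid0) tcomp1r.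
Qed.

Lemma tzigzag_cap : tcomp (ttens tPi i1) tcupR ≡ tid 1.
Proof.
by rewrite /tid (ttensI0A btens_bcap_bid1) (ttensI0A btens_bid1_bcup) (tcompI0 bcomp_bIcup_bcapI).
Qed.

Lemma tzigzag_cup : tcomp tcapR (ttens tAmalg i1) ≡ tid 1.
Proof.
by rewrite /tid (ttensI0A btens_bid1_bcap) (ttensI0A btens_bcup_bid1) (tcompI0 bcomp_bcupI_bIcap).
Qed.

Lemma tcap_out_ttens (F : tm K 1 1) : tcap_out (ttens F i1) ≡ F.
Proof. by rewrite /tcap_out tcupR_natural tcompA tzigzag_cap tcomp1l. Qed.

Lemma tcup_in_ttens (F : tm K 1 1) : tcup_in (ttens F i1) ≡ F.
Proof. by rewrite /tcup_in tcompA tcapR_natural -tcompA tzigzag_cup tcomp1r. Qed.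

Lemma tcap_out_cupcap (F G : tm K 1 1) :
  tcap_out (tcomp (tcomp (ttens F i1) tAmalg) (tcomp tPi (ttens G i1))) ≡
  tcomp (ttens (tcomp tPi (tcomp (ttens F i1) tAmalg)) i1) G.
Proof.
set A := tcomp (ttens F i1) tAmalg; set B := tcomp tPi (ttens G i1); rewrite /tcap_out.
transitivity (tcomp (tcomp (ttens tPi i1) (ttens A i1)) (tcomp (ttens B i1) tcupR)).
  by rewrite -(ttens_bid1M A B) !tcompA.
rewrite ttens_bid1M; apply: ab_comp => //.
by rewrite /B -(ttens_bid1M tPi (ttens G i1)) -tcompA tcupR_natural tcompA tzigzag_cap tcomp1l.
Qed.

Lemma tcup_in_cupcap (F G : tm K 1 1) :
  tcup_in (tcomp (tcomp (ttens G i1) tAmalg) (tcomp tPi (ttens F i1))) ≡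
  tcomp G (ttens (tcomp tPi (tcomp (ttens F i1) tAmalg)) i1).
Proof.
set A := tcomp (ttens G i1) tAmalg; set B := tcomp tPi (ttens F i1); rewrite /tcup_in.
transitivity (tcomp (tcomp tcapR (ttens A i1)) (tcomp (ttens B i1) (ttens tAmalg i1))).
  by rewrite -(ttens_bid1M A B) !tcompA.
rewrite (ttens_bid1M B tAmalg); apply: ab_comp; last by rewrite /B tcompA.
by rewrite /A -(ttens_bid1M (ttens G i1) tAmalg) tcompA tcapR_natural -tcompA tzigzag_cup tcomp1r.
Qed.

Lemma tPi_tcap_out (E : tm K 2 2) : tcomp tPi (ttens (tcap_out E) i1) ≡ tcomp tPi E.
Proof.
rewrite /tcap_out /tPi -!ttens_bid1M !tcompA.
rewrite (ttensI0A btens_bcap_bid1) (ttensI0A btens_bcapI_bid1).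
rewrite (tcompI0 bcomp_bcapII_bcap) -(tcompI0 bcomp_bIIcap_bcap) -(ttensI0A btens_bid2_bcap).
rewrite ttens_bid1_bid1_2 -[tcomp (tcomp _ _) (ttens E (bid 2))]tcompA.
rewrite (tinterchange (I0 (bid 2)) E bcomp_bid2_bcap) tcomp1l.
have -> : ttens E bcap ≡ tcomp E (ttens (I0 (bid 2)) bcap).
  by rewrite -{2}(ttens_bid0_2 E) (tinterchange E (I0 (bid 2)) bcomp_bcap_bid0) tcomp1r.
rewrite /tid (ttensI0A btens_bid2_bcap) (ttensI0A btens_bid1_bcup) (ttensI0A btens_bIcup_bid1).
by rewrite -!tcompA (tcompI0 bcomp_bIcupI_bIIcap) tcomp1r.
Qed.

Lemma tcup_in_Amalg (E : tm K 2 2) : tcomp (ttens (tcup_in E) i1) tAmalg ≡ tcomp E tAmalg.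
Proof.
rewrite /tcup_in /tAmalg -!ttens_bid1M -!tcompA.
rewrite (ttensI0A btens_bcup_bid1) (ttensI0A btens_bcupI_bid1).
rewrite (tcompI0 bcomp_bcup_bcupII) -(tcompI0 bcomp_bcup_bIIcup) -(ttensI0A btens_bid2_bcup).
rewrite ttens_bid1_bid1_2 [tcomp (ttens E (bid 2)) _]tcompA.
rewrite (tinterchange E (I0 (bid 2)) bcomp_bcup_bid2) tcomp1r.
have -> : ttens E bcup ≡ tcomp (ttens (I0 (bid 2)) bcup) E.
  by rewrite -{2}(ttens_bid0_2 E) (tinterchange (I0 (bid 2)) E bcomp_bid0_bcup) tcomp1l.
rewrite /tid (ttensI0A btens_bid2_bcup) (ttensI0A btens_bid1_bcap) (ttensI0A btens_bIcap_bid1).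
by rewrite !tcompA (tcompI0 bcomp_bIIcup_bIcapI) tcomp1l.
Qed.

Local Notation tE := (I0 bcupcap).
Local Notation tY := (tadd (@tH02 K) (@tH12 K)).
Local Notation Phi := (tPhi delta).

Lemma tX0X0 : tcomp tX0 tX0 ≡ tid 2. Proof. exact: tcompI0 bcomp_bX_bX. Qed.
Lemma tX0_E : tcomp tX0 tE ≡ tE. Proof. exact: tcompI0 bcomp_bcupcap_bX. Qed.
Lemma tE_X0 : tcomp tE tX0 ≡ tE. Proof. exact: tcompI0 bcomp_bX_bcupcap. Qed.
Lemma tPi_E : tcomp tPi tE ≡ tscale delta tPi.
Proof. exact: tcompI0_loop bcomp_bcupcap_bcap. Qed.
Lemma tE_Amalg : tcomp tE tAmalg ≡ tscale delta tAmalg.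
Proof. exact: tcompI0_loop bcomp_bcup_bcupcap. Qed.
Lemma tEE : tE ≡ tcomp tAmalg tPi. Proof. symmetry; exact: tcompI0 bcomp_bcap_bcup. Qed.
Lemma tPi_Amalg : tcomp tPi tAmalg ≡ tscale delta tI0.
Proof. by rewrite (tcompI0_loop bcomp_bcup_bcap) ttens_bid0_0. Qed.

Lemma tH01_Y : tcomp tH01 tY ≡ tcomp tY tH01.
Proof.
have := ab_rel_ii delta; rewrite /tcommut => rel_ii.
transitivity (tadd (tsub (tcomp tH01 tY) (tcomp tY tH01)) (tcomp tY tH01)); first by tlinear.
by rewrite rel_ii tadd0.
Qed.

Lemma tX0_Y : tcomp tX0 tY ≡ tadd (tcomp tH01 tX0) (tsub (tid 2) tE).
Proof. by rewrite /tH02 /tH12 tcompDr tcompBr !tcompA tX0X0 tcomp1l tX0_E. Qed.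

Lemma tY_X0 : tcomp tY tX0 ≡ tadd (tcomp tX0 tH01) (tsub (tid 2) tE).
Proof.
rewrite /tH02 /tH12 tcompDl tcompBl -!tcompA.
by rewrite tX0X0 tcomp1r tE_X0.
Qed.

Lemma ttens_Phi : ttens Phi i1 ≡ tsub (tscale (1 - delta) (tid 2)) tH01.
Proof. by rewrite /tPhi ttensB ttensZ /tid (ttensI0A btens_bid1_bid1). Qed.

Lemma tPi_H01_X0 : tcomp tPi (tcomp tH01 tX0) ≡ tneg (tcomp tPi tH01).
Proof.
by rewrite -tPi_tcap_out -ttrans_tcap_out ab_rel_iii /tneg ttensZ tcompZr.
Qed.

Lemma tX0_H01_Amalg : tcomp tX0 (tcomp tH01 tAmalg) ≡ tneg (tcomp tH01 tAmalg).
Proof.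
by rewrite tcompA -tcup_in_Amalg -ttrans_tcup_in ab_rel_iii /tneg ttensZ tcompZl.
Qed.

Lemma tPi_Y : tcomp tPi tY ≡ tcomp tPi (ttens Phi i1).
Proof.
rewrite ttens_Phi /tH02 /tH12 tcompDr !tcompBr tcompZr !tcompA tcomp1r tPi_X0.
by rewrite -tcompA tPi_H01_X0 tPi_E; tlinear.
Qed.

Lemma tY_Amalg : tcomp tY tAmalg ≡ tcomp (ttens Phi i1) tAmalg.
Proof.
rewrite ttens_Phi /tH02 /tH12 tcompDl !tcompBl tcompZl -!tcompA tcomp1l tX0_Amalg.
by rewrite tX0_H01_Amalg tE_Amalg; tlinear.
Qed.

Lemma tcomm_ttens_pow_Y (F : tm K 1 1) m :
  tcomp (ttens F i1) tY ≡ tcomp tY (ttens F i1) ->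
  tcomp (ttens (tpow F m) i1) tY ≡ tcomp tY (ttens (tpow F m) i1).
Proof.
move=> FY; elim: m => [|m IH] /=.
  by rewrite /tid (ttensI0A btens_bid1_bid1) tcomp1l tcomp1r.
by rewrite -ttens_bid1M -tcompA IH !tcompA FY.
Qed.

Lemma tcomm_Hpow_Y k : tcomp (ttens (tpow tH k) i1) tY ≡ tcomp tY (ttens (tpow tH k) i1).
Proof. exact/tcomm_ttens_pow_Y/tH01_Y. Qed.

Lemma tcomm_Phi_Y : tcomp (ttens Phi i1) tY ≡ tcomp tY (ttens Phi i1).
Proof. by rewrite ttens_Phi tcompBl tcompBr tcompZl tcompZr tcomp1l tcomp1r tH01_Y. Qed.

Lemma tcomm_Phipow_Y m : tcomp (ttens (tpow Phi m) i1) tY ≡ tcomp tY (ttens (tpow Phi m) i1).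
Proof. exact/tcomm_ttens_pow_Y/tcomm_Phi_Y. Qed.

Lemma tPi_Ypow m : tcomp tPi (tpow tY m) ≡ tcomp tPi (ttens (tpow Phi m) i1).
Proof.
elim: m => [|m IH] /=; first by rewrite /tid (ttensI0A btens_bid1_bid1).
rewrite tcompA tPi_Y -tcompA (tcomm_pow m tcomm_Phi_Y) tcompA IH -tcompA.
by rewrite (ttens_bid1M (tpow Phi m) Phi) -tpowSr.
Qed.

Lemma tYpow_Amalg m : tcomp (tpow tY m) tAmalg ≡ tcomp (ttens (tpow Phi m) i1) tAmalg.
Proof.
elim: m => [|m IH] /=; first by rewrite /tid (ttensI0A btens_bid1_bid1).
rewrite -tcompA IH tcompA -tcomm_Phipow_Y -tcompA tY_Amalg tcompA.
by rewrite (ttens_bid1M (tpow Phi m) Phi) -tpowSr.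
Qed.

Lemma tcomm_H_Phi : tcomp tH Phi ≡ tcomp Phi tH.
Proof. by rewrite /tPhi tcompBl tcompBr tcompZl tcompZr tcomp1l tcomp1r. Qed.

Lemma tcomm_Hpow_Phipow k m : tcomp (tpow tH k) (tpow Phi m) ≡ tcomp (tpow Phi m) (tpow tH k).
Proof. by symmetry; apply/tcomm_pow/ab_sym/tcomm_pow/tcomm_H_Phi. Qed.

Lemma ttens_Z0 : ttens (tZ 0) i1 ≡ tscale delta (tid 1).
Proof.
by rewrite /tZ /= /tid (ttensI0A btens_bid1_bid1) tcomp1l tPi_Amalg ttensZ.
Qed.

Lemma tcap_out_Hpow_Ypow k m :
  tcap_out (tcomp (ttens (tpow tH k) i1) (tpow tY m)) ≡ tcomp (tpow Phi m) (tpow tH k).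
Proof.
rewrite (tcomm_pow m (tcomm_Hpow_Y k)) (tcap_out_congr _ (tPi_Ypow m)).
by rewrite (ttens_bid1M (tpow Phi m) (tpow tH k)) tcap_out_ttens.
Qed.

Lemma tcup_in_Ypow_Hpow k m :
  tcup_in (tcomp (tpow tY m) (ttens (tpow tH k) i1)) ≡ tcomp (tpow tH k) (tpow Phi m).
Proof.
rewrite -(tcomm_pow m (tcomm_Hpow_Y k)) (tcup_in_congr _ (tYpow_Amalg m)).
by rewrite (ttens_bid1M (tpow tH k) (tpow Phi m)) tcup_in_ttens.
Qed.

Lemma tcap_out_Hpow_E_Ypow k m :
  tcap_out (tcomp (tcomp (ttens (tpow tH k) i1) tE) (tpow tY m)) ≡
  tcomp (ttens (tZ k) i1) (tpow Phi m).
Proof.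
transitivity (tcap_out (tcomp (tcomp (ttens (tpow tH k) i1) tAmalg) (tcomp tPi (tpow tY m)))).
  by rewrite tEE !tcompA.
by rewrite tPi_Ypow tcap_out_cupcap.
Qed.

Lemma tcup_in_Ypow_E_Hpow k m :
  tcup_in (tcomp (tcomp (tpow tY m) tE) (ttens (tpow tH k) i1)) ≡
  tcomp (tpow Phi m) (ttens (tZ k) i1).
Proof.
transitivity (tcup_in (tcomp (tcomp (tpow tY m) tAmalg) (tcomp tPi (ttens (tpow tH k) i1)))).
  by rewrite tEE !tcompA.
by rewrite tYpow_Amalg tcup_in_cupcap.
Qed.

Definition capHY k m : tm K 1 1 :=
  tcap_out (tcomp (tcomp (ttens (tpow tH k) i1) tX0) (tpow tY m)).

Definition cupYH k m : tm K 1 1 :=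
  tcup_in (tcomp (tpow tY m) (tcomp tX0 (ttens (tpow tH k) i1))).

Lemma ttens_HpowS k : ttens (tpow tH k.+1) i1 ≡ tcomp (ttens (tpow tH k) i1) tH01.
Proof. by rewrite tpowSr (ttens_bid1M (tpow tH k) tH). Qed.

Lemma ttens_HpowS' k : ttens (tpow tH k.+1) i1 ≡ tcomp tH01 (ttens (tpow tH k) i1).
Proof. by rewrite /= (ttens_bid1M tH (tpow tH k)). Qed.

Lemma capHY_rec k m :
  capHY k m.+1 ≡ tadd (capHY k.+1 m)
    (tsub (tcomp (tpow Phi m) (tpow tH k)) (tcomp (ttens (tZ k) i1) (tpow Phi m))).
Proof.
rewrite /capHY; set P := ttens (tpow tH k) i1.
have expand : tcomp (tcomp P tX0) (tpow tY m.+1) ≡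
    tadd (tcomp (tcomp (ttens (tpow tH k.+1) i1) tX0) (tpow tY m))
         (tsub (tcomp P (tpow tY m)) (tcomp (tcomp P tE) (tpow tY m))).
  rewrite /= tcompA -(tcompA P) tX0_Y ttens_HpowS.
  by rewrite tcompDr tcompBr tcomp1r tcompDl tcompBl !tcompA.
by rewrite expand tcap_outD tcap_outB tcap_out_Hpow_Ypow tcap_out_Hpow_E_Ypow.
Qed.

Lemma cupYH_rec k m :
  cupYH k m.+1 ≡ tadd (cupYH k.+1 m)
    (tsub (tcomp (tpow tH k) (tpow Phi m)) (tcomp (tpow Phi m) (ttens (tZ k) i1))).
Proof.
rewrite /cupYH; set P := ttens (tpow tH k) i1.
have expand : tcomp (tpow tY m.+1) (tcomp tX0 P) ≡
    tadd (tcomp (tpow tY m) (tcomp tX0 (ttens (tpow tH k.+1) i1)))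
         (tsub (tcomp (tpow tY m) P) (tcomp (tcomp (tpow tY m) tE) P)).
  rewrite tpowSr -tcompA (tcompA tY) tY_X0 ttens_HpowS'.
  by rewrite tcompDl tcompBl tcomp1l tcompDr tcompBr !tcompA.
by rewrite expand tcup_inD tcup_inB tcup_in_Ypow_Hpow tcup_in_Ypow_E_Hpow.
Qed.

Lemma capHY0 m : capHY 0 m ≡ tpow Phi m.
Proof.
rewrite -[tpow Phi m]tcomp1r -(tcap_out_Hpow_Ypow 0) /capHY /= /tid (ttensI0A btens_bid1_bid1).
by rewrite !tcomp1l tcap_out_X0.
Qed.

Lemma cupYH0 m : cupYH 0 m ≡ tpow Phi m.
Proof.
rewrite -[tpow Phi m]tcomp1l -(tcup_in_Ypow_Hpow 0) /cupYH /= /tid (ttensI0A btens_bid1_bid1).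
by rewrite !tcomp1r tcup_in_X0.
Qed.

Lemma ttrans_capHY l : ttrans (tpow tH l) ≡ capHY l 0.
Proof. by rewrite ttrans_tcap_out /capHY /= tcomp1r. Qed.

Lemma ttrans_cupYH l : ttrans (tpow tH l) ≡ cupYH l 0.
Proof. by rewrite ttrans_tcup_in /cupYH /= tcomp1l. Qed.

Section Sums.
Variables (r s : nat).
Implicit Types (F G : nat -> tm K r s).

Lemma tsum_recr F a b : (a <= b)%N -> tsum F a b.+1 ≡ tadd (tsum F a b) (F b).
Proof.
move=> ab; rewrite /tsum /index_iota (subSn ab) -addn1 iotaD subnKC // cats1.
elim: (iota a (b - a)) => [|i js IH] /=; first by rewrite tadd0 taddr0.
by rewrite IH taddA.
Qed.

Lemma eq_tsum F G a b : (forall i, F i ≡ G i) -> tsum F a b ≡ tsum G a b.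
Proof. by move=> FG; rewrite /tsum; elim: (index_iota a b) => //= i js ->; rewrite FG. Qed.

Lemma tsumB F G a b :
  tsum (fun i => tsub (F i) (G i)) a b ≡ tsub (tsum F a b) (tsum G a b).
Proof. by rewrite /tsum; elim: (index_iota a b) => [|i js IH] /=; rewrite ?IH; tlinear. Qed.

End Sums.

Lemma tcompPhil (A : tm K 1 1) : tcomp Phi A ≡ tsub (tscale (1 - delta) A) (tcomp tH A).
Proof. by rewrite /tPhi tcompBl tcompZl tcomp1l. Qed.

Lemma tcompPhir (A : tm K 1 1) : tcomp A Phi ≡ tsub (tscale (1 - delta) A) (tcomp A tH).
Proof. by rewrite /tPhi tcompBr tcompZr tcomp1r. Qed.

Lemma capHY1 m : capHY 1 m ≡ tneg (tcomp tH (tpow Phi m)).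
Proof.
have := capHY_rec 0 m; rewrite capHY0 ttens_Z0 /= tcompPhil tcomp1r tcompZl tcomp1l => rec.
transitivity (tsub (tadd (capHY 1 m) (tsub (tpow Phi m) (tscale delta (tpow Phi m))))
                   (tsub (tpow Phi m) (tscale delta (tpow Phi m)))); first by tlinear.
by rewrite -rec; tlinear.
Qed.

Lemma cupYH1 m : cupYH 1 m ≡ tneg (tcomp (tpow Phi m) tH).
Proof.
have := cupYH_rec 0 m; rewrite cupYH0 ttens_Z0 tpowSr /= tcompPhir tcomp1l tcompZr tcomp1r => rec.
transitivity (tsub (tadd (cupYH 1 m) (tsub (tpow Phi m) (tscale delta (tpow Phi m))))
                   (tsub (tpow Phi m) (tscale delta (tpow Phi m)))); first by tlinear.
by rewrite -rec; tlinear.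
Qed.

Lemma capHYS k m : capHY k.+2 m ≡ tadd (capHY k.+1 m.+1) (tcomp (tG k.+1) (tpow Phi m)).
Proof. by rewrite capHY_rec /tG tcompBl tcomm_Hpow_Phipow; tlinear. Qed.

Lemma cupYHS k m : cupYH k.+2 m ≡ tadd (cupYH k.+1 m.+1) (tcomp (tpow Phi m) (tG k.+1)).
Proof. by rewrite cupYH_rec /tG tcompBr tcomm_Hpow_Phipow; tlinear. Qed.

Lemma capHY_closed n m :
  capHY n.+1 m ≡ tsub (tsum (fun i => tcomp (tG i) (tpow Phi (m + n - i))) 1 n.+1)
                      (tcomp tH (tpow Phi (m + n))).
Proof.
elim: n m => [|n IH] m; first by rewrite capHY1 addn0 /tsum /=; tlinear.
rewrite capHYS IH addSnnS (tsum_recr _ (ltn0Sn n)) addnK; tlinear.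
Qed.

Lemma cupYH_closed n m :
  cupYH n.+1 m ≡ tsub (tsum (fun i => tcomp (tpow Phi (m + n - i)) (tG i)) 1 n.+1)
                      (tcomp (tpow Phi (m + n)) tH).
Proof.
elim: n m => [|n IH] m; first by rewrite cupYH1 addn0 /tsum /=; tlinear.
rewrite cupYHS IH addSnnS (tsum_recr _ (ltn0Sn n)) addnK; tlinear.
Qed.

Lemma ttrans_Hpow_G_Phi l :
  ttrans (tpow tH l.+1) ≡ tsub (tsum (fun i => tcomp (tG i) (tpow Phi (l - i))) 1 l.+1)
                               (tcomp tH (tpow Phi l)).
Proof. by rewrite ttrans_capHY capHY_closed. Qed.

Lemma ttrans_Hpow_Phi_G l :
  ttrans (tpow tH l.+1) ≡ tsub (tsum (fun i => tcomp (tpow Phi (l - i)) (tG i)) 1 l.+1)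
                               (tcomp (tpow Phi l) tH).
Proof. by rewrite ttrans_cupYH cupYH_closed. Qed.

Lemma tcommut_G_Phipow i m :
  tcommut (tG i) (tpow Phi m) ≡ tcommut (ttens (tZ i) i1) (tpow Phi m).
Proof. by rewrite /tcommut /tG tcompBl tcompBr tcomm_Hpow_Phipow; tlinear. Qed.

Lemma tsum_commut_Z_Phipow l :
  tsum (fun i => tcommut (ttens (tZ i) i1) (tpow Phi (l - i))) 1 l ≡ tzero.
Proof.
case: l => [|l]; first by [].
set GPhi := tsum (fun i => tcomp (tG i) (tpow Phi (l.+1 - i))) 1 l.+2.
set PhiG := tsum (fun i => tcomp (tpow Phi (l.+1 - i)) (tG i)) 1 l.+2.
have GPhi_PhiG : GPhi ≡ PhiG.
  have := ab_trans (ab_sym (ttrans_Hpow_G_Phi l.+1)) (ttrans_Hpow_Phi_G l.+1).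
  rewrite -(tcomm_pow l.+1 tcomm_H_Phi) => transposes.
  transitivity (tadd (tsub GPhi (tcomp tH (tpow Phi l.+1))) (tcomp tH (tpow Phi l.+1))).
    by tlinear.
  by rewrite transposes; tlinear.
have last_term : tcommut (ttens (tZ l.+1) i1) (tpow Phi (l.+1 - l.+1)) ≡ tzero.
  by rewrite subnn /tcommut /= tcomp1l tcomp1r; tlinear.
transitivity (tsub (tsum (fun i => tcommut (ttens (tZ i) i1) (tpow Phi (l.+1 - i))) 1 l.+2)
                   (tcommut (ttens (tZ l.+1) i1) (tpow Phi (l.+1 - l.+1)))).
  by rewrite (tsum_recr _ (ltn0Sn l)); tlinear.
rewrite last_term -(eq_tsum _ _ (fun i => tcommut_G_Phipow i (l.+1 - i))).
by rewrite /tcommut tsumB -/GPhi -/PhiG GPhi_PhiG; tlinear.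
Qed.

End PolarBrauer.

Theorem corollary2p18 (K : comPzRingType) (delta : K) (l : nat) :
  (* (H^{l+1})^T = sum_{i=1}^l G_i Phi^{l-i} - H Phi^l *)
  abeq delta (ttrans (tpow tH l.+1))
    (tsub (tsum (fun i => tcomp (tG i) (tpow (tPhi delta) (l - i))) 1 l.+1)
          (tcomp tH (tpow (tPhi delta) l)))
  /\
  (* (H^{l+1})^T = sum_{i=1}^l Phi^{l-i} G_i - Phi^l H *)
  abeq delta (ttrans (tpow tH l.+1))
    (tsub (tsum (fun i => tcomp (tpow (tPhi delta) (l - i)) (tG i)) 1 l.+1)
          (tcomp (tpow (tPhi delta) l) tH))
  /\
  (* sum_{i=1}^{l-1} [Z_i (x) I, Phi^{l-i}] = 0 *)
  abeq delta (tsum (fun i => tcommut (ttens (tZ i) (bid 1)) (tpow (tPhi delta) (l - i))) 1 l)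
    tzero.
Proof.
split; first exact: ttrans_Hpow_G_Phi.
split; first exact: ttrans_Hpow_Phi_G.
exact: tsum_commut_Z_Phipow.
Qed.
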